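(* Let $p \geq 5$ and $g \geq 2$ be integers such that $F = \frac{8(g-1)}{p-4}$ is a positive integer not divisible by $4$. Then: (1) a lattice $\Gamma_{p,3,g}$ does not exist; and (2) there is no tessellation $Y$ of the closed orientable genus $g$ surface $S_g$ by $F$ copies of a regular right-angled hyperbolic $p$-gon such that, for every odd integer $v \geq 3$, there is a uniform lattice $\Gamma_{p,v,g}$ in $\mathrm{Aut}(I_{p,v})$ with $\Gamma_{p,v,g} \backslash I_{p,v} \cong Y$.
   Context: For $p \geq 5$ and $v \geq 2$, Bourdon's building $I_{p,v}$ is the unique simply connected polygonal $2$-complex whose $2$-cells are regular right-angled hyperbolic $p$-gons and whose vertex links are the complete bipartite graph $K_{v,v}$. $\mathrm{Aut}(I_{p,v})$ is its group of cellular isometries with the compact-open topology. A uniform lattice is a subgroup acting cocompactly with finite cell stabilizers. ''A lattice $\Gamma_{p,v,g}$ exists'' means there is a uniform lattice $\Gamma < \mathrm{Aut}(I_{p,v})$ with $\Gamma \backslash I_{p,v}$ isometric to a compact orientable genus $g$ surface tiled by regular right-angled hyperbolic $p$-gons. $\cong$ denotes isomorphism of polygonal complexes. *)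

From Stdlib Require Import Arith List Relations.
Import ListNotations.

Set Implicit Arguments.

(* A polygonal 2-complex all of whose 2-cells are p-gons.
   - cV : vertices; cD : darts (oriented edges); cF : 2-cells.
   - dinv : reversal of a dart (fixed-point free involution); an (unoriented)
     edge is a pair {d, dinv d}.
   - bd f : nat -> cD  : the boundary cycle of the face f (period p), read
     from some base corner in some direction. *)
Record cx (p : nat) := Cx {
  cV : Type; cD : Type; cF : Type;
  src : cD -> cV;
  dinv : cD -> cD;
  dinv_inv : forall d, dinv (dinv d) = d;
  dinv_nofix : forall d, dinv d <> d;
  bd : cF -> nat -> cD;
  bd_per : forall f i, bd f (i + p) = bd f i;
  bd_chain : forall f i, src (dinv (bd f i)) = src (bd f (S i))
}.

Arguments cV {p}. Arguments cD {p}. Arguments cF {p}.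
Arguments src {p X} _ : rename. Arguments dinv {p X} _ : rename.
Arguments bd {p X} _ _ : rename.

Definition tgt {p} {X : cx p} (d : cD X) : cV X := src (dinv d).

(* Cellular maps: vertices, darts, faces, compatible with incidence; a face
   is sent onto a face, its boundary cycle being matched up to a rotation
   and/or a reversal (dihedral reparametrisation). *)
Definition is_morph {p} (X Y : cx p) (fV : cV X -> cV Y) (fD : cD X -> cD Y)
    (fF : cF X -> cF Y) : Prop :=
  (forall d, fV (src d) = src (fD d)) /\
  (forall d, fD (dinv d) = dinv (fD d)) /\
  (forall f, exists k,
      (forall i, bd (fF f) i = fD (bd f (k + i))) \/
      (forall i, bd (fF f) i = dinv (fD (bd f (k + (p - 1) * i))))).

Definition bij_on {T U : Type} (A : T -> Prop) (B : U -> Prop) (h : T -> U) : Prop :=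
  (forall x, A x -> B (h x)) /\
  (forall x y, A x -> A y -> h x = h y -> x = y) /\
  (forall b, B b -> exists x, A x /\ h x = b).

(* Link of a vertex x: its vertices are the darts starting at x, its edges
   are the corners (f, i) (i < p) of faces at x; the corner (f,i) joins the
   darts dinv (bd f (i-1)) and bd f i.  [link_iso X x HV HE ends] says this
   (multi)graph is isomorphic to the graph with vertex set HV, edge set HE and
   endpoint map ends. *)
Definition link_iso {p} (X : cx p) (x : cV X) {U W : Type}
    (HV : U -> Prop) (HE : W -> Prop) (ends : W -> U * U) : Prop :=
  exists (alpha : cD X -> U) (beta : cF X * nat -> W),
    bij_on (fun d => src d = x) HV alpha /\
    bij_on (fun c => snd c < p /\ src (bd (fst c) (snd c)) = x) HE beta /\
    (forall f i, i < p -> src (bd f i) = x ->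
       let e1 := alpha (dinv (bd f (i + p - 1))) in
       let e2 := alpha (bd f i) in
       let (u1, u2) := ends (beta (f, i)) in
       (e1 = u1 /\ e2 = u2) \/ (e1 = u2 /\ e2 = u1)).

Definition Kvv_V (v : nat) (u : bool * nat) : Prop := snd u < v.
Definition Kvv_E (v : nat) (w : nat * nat) : Prop := fst w < v /\ snd w < v.
Definition Kvv_ends (w : nat * nat) : (bool * nat) * (bool * nat) :=
  ((false, fst w), (true, snd w)).

Definition C4_V (j : nat) : Prop := j < 4.
Definition C4_E (j : nat) : Prop := j < 4.
Definition C4_ends (j : nat) : nat * nat := (j, (S j) mod 4).

Definition adj {p} (X : cx p) (x y : cV X) : Prop :=
  exists d, src d = x /\ tgt d = y.
Definition connected {p} (X : cx p) : Prop :=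
  forall x y : cV X, clos_refl_trans _ (adj X) x y.

Fixpoint is_path {p} {X : cx p} (x : cV X) (l : list (cD X)) : Prop :=
  match l with
  | [] => True
  | d :: l' => src d = x /\ is_path (tgt d) l'
  end.
Definition endv {p} {X : cx p} (x : cV X) (l : list (cD X)) : cV X :=
  fold_left (fun _ d => tgt d) l x.

Definition face_loop {p} {X : cx p} (f : cF X) (k : nat) : list (cD X) :=
  map (fun i => bd f (k + i)) (seq 0 p).

Definition htpy_step {p} {X : cx p} (x : cV X) (l l' : list (cD X)) : Prop :=
  exists l1 l2 loop,
    l = l1 ++ l2 /\ l' = l1 ++ loop ++ l2 /\
    ((exists d, src d = endv x l1 /\ loop = [d; dinv d]) \/
     (exists f k, src (bd f k) = endv x l1 /\ loop = face_loop f k)).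

Definition simply_connected {p} (X : cx p) : Prop :=
  connected X /\
  forall (x : cV X) (l : list (cD X)), is_path x l -> endv x l = x ->
    clos_refl_sym_trans _ (htpy_step x) l [].

(* Bourdon's building I_{p,v}: simply connected, all vertex links K_{v,v}
   (unique up to isomorphism, by Bourdon). *)
Definition bourdon (p v : nat) (X : cx p) : Prop :=
  simply_connected X /\
  forall x : cV X, link_iso X x (Kvv_V v) (Kvv_E v) Kvv_ends.
Arguments bourdon : clear implicits.

(* A subgroup of Aut(X): an abstract group acting faithfully on X by
   cellular automorphisms. *)
Record action {p} (X : cx p) := Action {
  G : Type;
  gmul : G -> G -> G;
  ginv : G -> G;
  gone : G;
  gmulA : forall a b c, gmul a (gmul b c) = gmul (gmul a b) c;
  gmul1 : forall a, gmul gone a = a;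
  gmulV : forall a, gmul (ginv a) a = gone;
  aV : G -> cV X -> cV X;
  aD : G -> cD X -> cD X;
  aF : G -> cF X -> cF X;
  a_morph : forall g, is_morph X X (aV g) (aD g) (aF g);
  aV1 : forall x, aV gone x = x;
  aD1 : forall d, aD gone d = d;
  aF1 : forall f, aF gone f = f;
  aVM : forall g h x, aV (gmul g h) x = aV g (aV h x);
  aDM : forall g h d, aD (gmul g h) d = aD g (aD h d);
  aFM : forall g h f, aF (gmul g h) f = aF g (aF h f);
  a_faithful : forall g, (forall x, aV g x = x) -> (forall d, aD g d = d) ->
                 (forall f, aF g f = f) -> g = gone
}.

Arguments G {p X} _ : rename.
Arguments aV {p X} _ _ _ : rename.
Arguments aD {p X} _ _ _ : rename.
Arguments aF {p X} _ _ _ : rename.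

Definition finite_pred {T : Type} (P : T -> Prop) : Prop :=
  exists l : list T, forall t, P t -> In t l.

(* uniform lattice: cocompact (finitely many orbits of cells) with finite
   cell stabilisers *)
Definition uniform_lattice {p} {X : cx p} (Ga : action X) : Prop :=
  (exists l : list (cV X), forall x, exists g y, In y l /\ aV Ga g y = x) /\
  (exists l : list (cD X), forall d, exists g e, In e l /\ aD Ga g e = d) /\
  (exists l : list (cF X), forall f, exists g h, In h l /\ aF Ga g h = f) /\
  (forall x, finite_pred (fun g => aV Ga g x = x)) /\
  (forall d, finite_pred (fun g => aD Ga g d = d \/ aD Ga g d = dinv d)) /\
  (forall f, finite_pred (fun g => aF Ga g f = f)).

(* Ga \ X is isomorphic (as a polygonal complex) to Y: a cellular map
   X -> Y, onto on each kind of cell, whose fibres are exactly the orbits *)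
Definition quotient_iso {p} {X : cx p} (Ga : action X) (Y : cx p) : Prop :=
  exists (pV : cV X -> cV Y) (pD : cD X -> cD Y) (pF : cF X -> cF Y),
    is_morph X Y pV pD pF /\
    (forall y, exists x, pV x = y) /\
    (forall e, exists d, pD d = e) /\
    (forall h, exists f, pF f = h) /\
    (forall x x', pV x = pV x' <-> exists g, aV Ga g x = x') /\
    (forall d d', pD d = pD d' <-> exists g, aD Ga g d = d') /\
    (forall f f', pF f = pF f' <-> exists g, aF Ga g f = f').

Definition fin_card (T : Type) (n : nat) : Prop :=
  exists l : list T, NoDup l /\ (forall t, In t l) /\ length l = n.

Definition orientable {p} (Y : cx p) : Prop :=
  exists eps : cF Y -> bool,
    let od f i := if eps f then bd f i else dinv (bd f i) in
    forall d, exists f i, i < p /\ od f i = d /\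
      forall f' i', i' < p -> od f' i' = d -> f' = f /\ i' = i.

(* Y is a tessellation of the closed orientable surface of genus g by nF
   regular right-angled hyperbolic p-gons: connected, every vertex link a
   4-cycle (surface, four right angles at each vertex), orientable, finite,
   Euler characteristic V - E + F = 2 - 2g (with E = #darts / 2). *)
Definition tessellation (p g nF : nat) (Y : cx p) : Prop :=
  connected Y /\
  (forall y : cV Y, link_iso Y y C4_V C4_E C4_ends) /\
  orientable Y /\
  fin_card (cF Y) nF /\
  exists nV nD, fin_card (cV Y) nV /\ fin_card (cD Y) nD /\
    2 * nV + 2 * nF + 4 * g = nD + 4.
Arguments tessellation : clear implicits.

Definition lattice_exists (p v g : nat) : Prop :=
  exists X : cx p, bourdon p v X /\
  exists Ga : action X, uniform_lattice Ga /\
  exists Y : cx p, (exists nF, tessellation p g nF Y) /\ quotient_iso Ga Y.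

From Stdlib Require Import Arith Lia List Bool Classical ClassicalEpsilon.
Import ListNotations.

(** Let [Γ \ I_{p,3} ≅ Y] with [Y] a right-angled tessellation of a surface.
    For a vertex [x] of [I_{p,3}] over [y] in [Y], the link map [K_{3,3} → C_4]
    has edge fibres of sizes [1, 2, 2, 4], and the stabiliser of [x] acts
    transitively on each fibre, with point stabilisers the stabilisers of the
    corresponding faces.  Writing [N_y = |Γ_x|] and [m_h = |Γ_f|] for a face
    [f] over [h], counting the corners of [Y] whose face has [m_h = k] gives
    [p · #{h | m_h = k} = V(k) + 2 V(2k) + V(4k)], where [V(k) = #{y | N_y = k}].
    Descending induction on [k] shows that [p] divides every [V(k)], hence
    the number of vertices of [Y].  Since every vertex of [Y] has four corners,
    [4 |V(Y)| = p |F(Y)|], so [4] divides [|F(Y)|], which the Euler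
    characteristic forces to be [8(g-1)/(p-4)]. *)

Definition modeq (p a b : nat) : Prop := exists x y, a + x * p = b + y * p.

Lemma modeq_refl p a : modeq p a a.
Proof. exists 0, 0. lia. Qed.

Lemma modeq_sym p a b : modeq p a b -> modeq p b a.
Proof. intros [x [y H]]. exists y, x. lia. Qed.

Lemma modeq_trans p a b c : modeq p a b -> modeq p b c -> modeq p a c.
Proof. intros [x [y H]] [x' [y' H']]. exists (x + x'), (y + y'). nia. Qed.

Lemma modeq_add p a b c d : modeq p a b -> modeq p c d -> modeq p (a + c) (b + d).
Proof. intros [x [y H]] [x' [y' H']]. exists (x + x'), (y + y'). nia. Qed.

Lemma modeq_mull p a b c : modeq p a b -> modeq p (c * a) (c * b).
Proof. intros [x [y H]]. exists (c * x), (c * y). nia. Qed.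

Lemma modeq_add_mulr p a q : modeq p (a + q * p) a.
Proof. exists 0, q. lia. Qed.

Lemma modeq_small p a b : a < p -> b < p -> modeq p a b -> a = b.
Proof.
  intros Ha Hb [x [y H]].
  destruct (Nat.lt_trichotomy x y) as [Hl | [-> | Hl]]; [| lia |];
    [assert (y * p >= (x + 1) * p) | assert (x * p >= (y + 1) * p)];
    try (apply Nat.mul_le_mono_r; lia); nia.
Qed.

Lemma modeq_mod p n : 0 < p -> exists r, r < p /\ modeq p n r.
Proof.
  intros Hp. exists (n mod p). split; [apply Nat.mod_upper_bound; lia |].
  exists 0, (n / p). rewrite (Nat.div_mod n p) at 1 by lia. lia.
Qed.

Lemma modeq_pred_sq p n : 0 < p -> modeq p ((p - 1) * ((p - 1) * n)) n.
Proof.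
  intros Hp. destruct p as [|q]; [lia |]. replace (S q - 1) with q by lia.
  exists n, (q * n). nia.
Qed.

Definition ueq {T} (a b : T * T) : Prop :=
  (fst a = fst b /\ snd a = snd b) \/ (fst a = snd b /\ snd a = fst b).
Definition pmap {T U} (h : T -> U) (a : T * T) : U * U := (h (fst a), h (snd a)).
Definition swap {T} (a : T * T) : T * T := (snd a, fst a).

Lemma ueq_refl {T} (a : T * T) : ueq a a.
Proof. left; auto. Qed.

Lemma ueq_sym {T} (a b : T * T) : ueq a b -> ueq b a.
Proof. unfold ueq; intuition. Qed.

Lemma ueq_trans {T} (a b c : T * T) : ueq a b -> ueq b c -> ueq a c.
Proof.
  unfold ueq; intros [[] | []] [[] | []]; [left | right | right | left]; split; congruence.
Qed.

Lemma ueq_swap {T} (a : T * T) : ueq a (swap a).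
Proof. right; auto. Qed.

Lemma ueq_pmap {T U} (h : T -> U) a b : ueq a b -> ueq (pmap h a) (pmap h b).
Proof. unfold ueq, pmap; simpl; intros [[] | []]; [left | right]; split; congruence. Qed.

Lemma ueq_pmap_inj_on {T U} (P : T -> Prop) (h : T -> U) a b :
  (forall x y, P x -> P y -> h x = h y -> x = y) ->
  P (fst a) -> P (snd a) -> P (fst b) -> P (snd b) ->
  ueq (pmap h a) (pmap h b) -> ueq a b.
Proof.
  intros Hi H1 H2 H3 H4. unfold ueq, pmap; simpl.
  intros [[] | []]; [left | right]; split; auto.
Qed.

Lemma ueq_forall {T} (P : T -> Prop) a b :
  ueq a b -> P (fst b) -> P (snd b) -> P (fst a) /\ P (snd a).
Proof. intros [[E1 E2] | [E1 E2]] H1 H2; rewrite E1, E2; auto. Qed.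

(* The two darts of the link edge at corner [i] of [f], as in [link_iso]. *)
Definition corner {p} {X : cx p} (f : cF X) (i : nat) : cD X * cD X :=
  (dinv (bd f (i + p - 1)), bd f i).

Lemma bd_modeq {p} (X : cx p) (f : cF X) a b : modeq p a b -> bd f a = bd f b.
Proof.
  assert (Hq : forall i q, bd f (i + q * p) = bd f i).
  { intros i q. induction q as [|q IH]; simpl; [rewrite Nat.add_0_r; auto |].
    replace (i + (p + q * p)) with ((i + q * p) + p) by lia. rewrite bd_per; auto. }
  intros [x [y H]]. rewrite <- (Hq a x), <- (Hq b y), H. auto.
Qed.

Lemma corner_modeq {p} (X : cx p) (f : cF X) a b : modeq p a b -> corner f a = corner f b.
Proof.
  intros H. unfold corner. rewrite (bd_modeq X f a b H).
  rewrite (bd_modeq X f (a + p - 1) (b + p - 1)); auto.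
  destruct H as [x [y H]]. exists x, y. nia.
Qed.

Lemma src_corner1 {p} (X : cx p) (f : cF X) i :
  0 < p -> src (fst (corner f i)) = src (bd f i).
Proof.
  intros Hp. unfold corner; simpl. rewrite bd_chain.
  replace (S (i + p - 1)) with (i + p) by lia. rewrite bd_per. auto.
Qed.

(* How a cellular map reindexes the boundary of a face: rotation by [k],
   preserving ([s = true]) or reversing the orientation. *)
Definition reindex (p : nat) (s : bool) (k i j : nat) : Prop :=
  if s then modeq p (k + j) i else modeq p (k + (p - 1) * j + 1) i.

Lemma morph_corner {p} (X Y : cx p) fV fD fF : 1 < p -> is_morph X Y fV fD fF ->
  forall f, exists s k, forall i j, reindex p s k i j ->
    corner (fF f) j = (if s then pmap fD (corner f i) else swap (pmap fD (corner f i))).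
Proof.
  intros Hp [HV [HD HF]] f. destruct (HF f) as [k [H | H]].
  - exists true, k. intros i j Hr. simpl in Hr. unfold corner, pmap; simpl.
    rewrite !H, HD, (bd_modeq X f (k + j) i Hr).
    rewrite (bd_modeq X f (k + (j + p - 1)) (i + p - 1)); auto.
    destruct Hr as [x [y Hr]]. exists x, y. lia.
  - exists false, k. intros i j Hr. simpl in Hr. unfold corner, pmap, swap; simpl.
    rewrite !H, HD, !dinv_inv. destruct p as [|q]; [lia |].
    replace (S q - 1) with q in * by lia.
    destruct Hr as [x [y Hr]].
    rewrite (bd_modeq X f (k + q * (j + S q - 1)) i).
    rewrite (bd_modeq X f (k + q * j) (i + S q - 1)); auto.
    + replace (i + S q - 1) with (i + q) by lia. exists (x + 1), y. nia.
    + replace (j + S q - 1) with (j + q) by lia. exists x, (y + q - 1).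
      destruct q; [lia |]. replace (S q + y - 1) with (q + y) by lia. nia.
Qed.

Lemma morph_corner_ueq {p} (X Y : cx p) fV fD fF : 1 < p -> is_morph X Y fV fD fF ->
  forall f, exists s k, forall i j, reindex p s k i j ->
    ueq (corner (fF f) j) (pmap fD (corner f i)).
Proof.
  intros Hp Hm f. destruct (morph_corner X Y fV fD fF Hp Hm f) as [s [k H]].
  exists s, k. intros i j Hr. rewrite (H i j Hr).
  destruct s; [apply ueq_refl | apply ueq_sym, ueq_swap].
Qed.

Lemma reindex_ex p s k i : 0 < p -> exists j, j < p /\ reindex p s k i j.
Proof.
  intros Hp. destruct s; simpl.
  - destruct (modeq_mod p (i + p * k - k) Hp) as [j [Hj Hm]]. exists j; split; auto.
    destruct Hm as [x [y H]]. exists y, (x + k). nia.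
  - destruct (modeq_mod p ((p - 1) * (i + (p - 1) * (k + 1))) Hp) as [j [Hj Hm]].
    exists j; split; auto.
    assert (H1 : modeq p ((p - 1) * j) (i + (p - 1) * (k + 1))).
    { eapply modeq_trans; [apply modeq_sym, modeq_mull, Hm | apply modeq_pred_sq; auto]. }
    assert (H2 : modeq p (k + (p - 1) * j + 1) (i + (k + 1) * p)).
    { replace (k + (p - 1) * j + 1) with ((p - 1) * j + (k + 1)) by lia.
      replace (i + (k + 1) * p) with ((i + (p - 1) * (k + 1)) + (k + 1)) by nia.
      apply modeq_add; auto. apply modeq_refl. }
    eapply modeq_trans; [exact H2 | apply modeq_add_mulr].
Qed.

Lemma reindex_inj p s k i i' j : reindex p s k i j -> reindex p s k i' j -> modeq p i i'.
Proof.
  destruct s; simpl; intros H1 H2; eapply modeq_trans; eauto using modeq_sym.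
Qed.

Lemma link_iso_corner {p} (X : cx p) (x : cV X) {U W : Type} (HV : U -> Prop)
  (HE : W -> Prop) (ends : W -> U * U) (alpha : cD X -> U) (beta : cF X * nat -> W) :
  (forall f i, i < p -> src (bd f i) = x ->
       let e1 := alpha (dinv (bd f (i + p - 1))) in
       let e2 := alpha (bd f i) in
       let (u1, u2) := ends (beta (f, i)) in
       (e1 = u1 /\ e2 = u2) \/ (e1 = u2 /\ e2 = u1)) ->
  forall f i, i < p -> src (bd f i) = x ->
    ueq (pmap alpha (corner f i)) (ends (beta (f, i))).
Proof.
  intros H f i Hi Hs. specialize (H f i Hi Hs). simpl in H.
  destruct (ends (beta (f, i))) as [u1 u2]. exact H.
Qed.

Lemma link_corner_inj {p} (X : cx p) (x : cV X) {U W : Type} (HV : U -> Prop)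
  (HE : W -> Prop) (ends : W -> U * U) :
  0 < p ->
  (forall e e', HE e -> HE e' -> ueq (ends e) (ends e') -> e = e') ->
  link_iso X x HV HE ends ->
  forall f f' i i', i < p -> i' < p -> src (bd f i) = x ->
  ueq (corner f i) (corner f' i') -> f = f' /\ i = i'.
Proof.
  intros Hp Hinj [alpha [beta [Ha [[Hb1 [Hb2 _]] He]]]] f f' i i' Hi Hi' Hs Hu.
  assert (Hs' : src (bd f' i') = x).
  { rewrite <- Hs. destruct Hu as [[H1 H2] | [H1 H2]]; simpl in *.
    - rewrite <- H2; auto.
    - rewrite <- H1. apply (src_corner1 X f i Hp). }
  pose proof (link_iso_corner X x HV HE ends alpha beta He f i Hi Hs) as E1.
  pose proof (link_iso_corner X x HV HE ends alpha beta He f' i' Hi' Hs') as E2.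
  assert (Hbeta : beta (f, i) = beta (f', i')).
  { apply Hinj; [apply Hb1; simpl; auto | apply Hb1; simpl; auto |].
    eapply ueq_trans; [apply ueq_sym; exact E1 |]. eapply ueq_trans; [| exact E2].
    apply ueq_pmap; auto. }
  assert (Heq : (f, i) = (f', i')) by (apply Hb2; simpl; auto).
  injection Heq; auto.
Qed.

Lemma C4_ends_inj e e' : e < 4 -> e' < 4 -> ueq (C4_ends e) (C4_ends e') -> e = e'.
Proof.
  intros He He' H. unfold C4_ends, ueq in H; simpl in H.
  destruct e as [|[|[|[|e]]]]; destruct e' as [|[|[|[|e']]]]; simpl in H; lia.
Qed.

Lemma Kvv_ends_inj e e' : ueq (Kvv_ends e) (Kvv_ends e') -> e = e'.
Proof.
  destruct e as [a b], e' as [a' b']. unfold Kvv_ends, ueq; simpl.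
  intros [[H1 H2] | [H1 H2]]; [injection H1; injection H2; intros; subst; auto | discriminate].
Qed.

Lemma C4_corner_inj {p} (Y : cx p) : 0 < p ->
  (forall y : cV Y, link_iso Y y C4_V C4_E C4_ends) ->
  forall (h h' : cF Y) j j', j < p -> j' < p ->
  ueq (corner h j) (corner h' j') -> h = h' /\ j = j'.
Proof.
  intros Hp HY h h' j j' Hj Hj' Hu.
  eapply (link_corner_inj Y (src (bd h j)) C4_V C4_E C4_ends Hp); eauto.
  intros e e' He He' Hu'. apply C4_ends_inj; auto.
Qed.

Lemma Kvv_corner_inj {p} (X : cx p) v (x : cV X) : 0 < p ->
  link_iso X x (Kvv_V v) (Kvv_E v) Kvv_ends ->
  forall f f' i i', i < p -> i' < p -> src (bd f i) = x ->
  ueq (corner f i) (corner f' i') -> f = f' /\ i = i'.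
Proof.
  intros Hp HX. eapply (link_corner_inj X x _ _ Kvv_ends Hp); eauto.
  intros; apply Kvv_ends_inj; auto.
Qed.

Lemma reindex_rev_not_trivial p k : 2 < p ->
  ~ (forall i j, reindex p false k i j -> modeq p j i).
Proof.
  intros Hp Hc.
  assert (Hfix : forall i, modeq p (k + (p - 1) * i + 1) i).
  { intros i. destruct (reindex_ex p false k i ltac:(lia)) as [j [_ Hr]].
    eapply modeq_trans; [| exact Hr].
    apply modeq_add; [apply modeq_add; [apply modeq_refl |] | apply modeq_refl].
    apply modeq_mull, modeq_sym, Hc, Hr. }
  assert (H0 : modeq p (k + 1) 0).
  { replace (k + 1) with (k + (p - 1) * 0 + 1) by lia. apply Hfix. }
  assert (H1 : modeq p k 1).
  { eapply modeq_trans; [apply modeq_sym, (modeq_add_mulr p k 1) |].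
    replace (k + 1 * p) with (k + (p - 1) * 1 + 1) by lia. apply Hfix. }
  assert (H2 : modeq p (1 + 1) 0).
  { eapply modeq_trans; [| exact H0]. apply modeq_add; [apply modeq_sym, H1 | apply modeq_refl]. }
  apply modeq_small in H2; lia.
Qed.

Section Quotient.
Variable p : nat.
Hypothesis Hp : 2 < p.
Variables X Y : cx p.
Variable Ga : action X.
Variables (pV : cV X -> cV Y) (pD : cD X -> cD Y) (pF : cF X -> cF Y).
Hypothesis HY : forall y : cV Y, link_iso Y y C4_V C4_E C4_ends.
Hypothesis Hm : is_morph X Y pV pD pF.
Hypothesis HiD : forall d d', pD d = pD d' <-> exists g, aD Ga g d = d'.

Lemma pD_aD g d : pD (aD Ga g d) = pD d.
Proof. symmetry. apply HiD. eauto. Qed.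

Lemma pmap_pD_aD g a : pmap pD (pmap (aD Ga g) a) = pmap pD a.
Proof. unfold pmap; simpl. rewrite !pD_aD. auto. Qed.

Lemma pD_corner_inj f i i' :
  ueq (pmap pD (corner f i)) (pmap pD (corner f i')) -> modeq p i i'.
Proof.
  intros Hu. destruct (morph_corner_ueq X Y pV pD pF ltac:(lia) Hm f) as [s [k H]].
  destruct (reindex_ex p s k i ltac:(lia)) as [j [Hj Hr]].
  destruct (reindex_ex p s k i' ltac:(lia)) as [j' [Hj' Hr']].
  assert (Hjj : ueq (corner (pF f) j) (corner (pF f) j')).
  { eapply ueq_trans; [apply H, Hr |]. eapply ueq_trans; [exact Hu |].
    apply ueq_sym, H, Hr'. }
  destruct (C4_corner_inj Y ltac:(lia) HY _ _ _ _ Hj Hj' Hjj) as [_ ->].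
  eapply reindex_inj; eauto.
Qed.

(* Distinct corners of a face have distinct images in [Y], so an element
   fixing the face induces the identity reindexing of its boundary
   (a reflection is impossible since [p > 2]). *)
Lemma face_stab_fixes_bd g f : aF Ga g f = f -> forall i, aD Ga g (bd f i) = bd f i.
Proof.
  intros Hg. destruct (morph_corner X X _ _ _ ltac:(lia) (a_morph Ga g) f) as [s [k H]].
  rewrite Hg in H.
  assert (Hc : forall i j, reindex p s k i j -> modeq p j i).
  { intros i j Hr. apply (pD_corner_inj f). rewrite <- (pmap_pD_aD g (corner f i)).
    apply ueq_pmap. rewrite (H i j Hr).
    destruct s; [apply ueq_refl | apply ueq_sym, ueq_swap]. }
  destruct s; [| exfalso; exact (reindex_rev_not_trivial p k Hp Hc)].
  intros i. destruct (reindex_ex p true k i ltac:(lia)) as [j [Hj Hr]].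
  pose proof (H i j Hr) as E. unfold corner, pmap in E. simpl in E.
  injection E; intros E2 _. rewrite <- E2. apply bd_modeq, Hc, Hr.
Qed.

Lemma face_stab_fixes_corner g f i : aF Ga g f = f -> pmap (aD Ga g) (corner f i) = corner f i.
Proof.
  intros Hg. unfold pmap, corner; simpl. destruct (a_morph Ga g) as [_ [HD _]].
  rewrite HD, !(face_stab_fixes_bd g f Hg). auto.
Qed.

Lemma face_stab_fixes_vertex g f i : aF Ga g f = f -> aV Ga g (src (bd f i)) = src (bd f i).
Proof.
  intros Hg. destruct (a_morph Ga g) as [HV _]. rewrite HV, face_stab_fixes_bd; auto.
Qed.

End Quotient.

Definition cardP {T} (P : T -> Prop) (n : nat) : Prop :=
  exists l, NoDup l /\ (forall t, P t <-> In t l) /\ length l = n.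

Lemma cardP_unique {T} (P : T -> Prop) n m : cardP P n -> cardP P m -> n = m.
Proof.
  intros [l [Hl [Hi Hn]]] [l' [Hl' [Hi' Hm]]]. subst.
  apply Nat.le_antisymm; apply NoDup_incl_length; auto; intros t Ht;
    [apply Hi', Hi | apply Hi, Hi']; auto.
Qed.

Lemma cardP_exists {T} (P : T -> Prop) : finite_pred P -> exists n, cardP P n.
Proof.
  intros [l Hl].
  assert (Hr : exists r, NoDup r /\ forall t, In t r <-> (In t l /\ P t)).
  { clear Hl. induction l as [|a l IH].
    - exists []. split; [constructor |]. simpl; tauto.
    - destruct IH as [r [Hr Hi]].
      destruct (classic (P a /\ ~ In a r)) as [[Ha Hn] | Hn].
      + exists (a :: r). split; [constructor; auto |]. intros t; simpl; rewrite Hi.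
        split; [intros [<- | []]; auto |]. intros [[<- | H1] H2]; auto.
      + exists r. split; auto. intros t; simpl; rewrite Hi. split; [tauto |].
        intros [[<- | H1] H2]; auto. apply NNPP; intros Hc. apply Hn; split; auto.
        intros Hc'. apply Hc. apply Hi in Hc'. tauto. }
  destruct Hr as [r [Hr Hi]]. exists (length r), r. repeat split; auto.
  - intros Ht. apply Hi; split; auto.
  - intros Ht; apply Hi; auto.
Qed.

Lemma cardP_pos {T} (P : T -> Prop) n t : cardP P n -> P t -> 0 < n.
Proof.
  intros [l [_ [Hi Hn]]] Ht. apply Hi in Ht. destruct l; simpl in *; [tauto | lia].
Qed.

Lemma NoDup_flat_map_disjoint {A B} (F : A -> list B) (l : list A) :
  NoDup l -> (forall a, In a l -> NoDup (F a)) ->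
  (forall a b z, In a l -> In b l -> In z (F a) -> In z (F b) -> a = b) ->
  NoDup (flat_map F l).
Proof.
  induction l as [|a l IH]; simpl; intros Hn Hf Hd; [constructor |].
  inversion Hn; subst. apply NoDup_app; [apply Hf; simpl; auto | |].
  - apply IH; auto. intros a' b' z A1 A2 Z1 Z2. apply (Hd a' b' z); simpl; auto.
  - intros z Hz Hz'. apply in_flat_map in Hz'. destruct Hz' as [b [Hb Hzb]].
    assert (a = b) by (apply (Hd a b z); simpl; auto). subst; contradiction.
Qed.

Lemma NoDup_length_eq {T} (l1 l2 : list T) : NoDup l1 -> NoDup l2 ->
  (forall z, In z l1 <-> In z l2) -> length l1 = length l2.
Proof.
  intros H1 H2 Hi.
  apply Nat.le_antisymm; apply NoDup_incl_length; auto; intros z Hz; apply Hi; auto.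
Qed.

Section GroupAction.
Context {p : nat} {X : cx p} (Ga : action X).
Notation mul := (gmul Ga).
Notation inv := (ginv Ga).
Notation one := (gone Ga).

Lemma gmul_inv_r a : mul a (inv a) = one.
Proof.
  transitivity (mul (mul (inv (inv a)) (inv a)) (mul a (inv a))).
  { rewrite gmulV, gmul1. auto. }
  rewrite <- gmulA, (gmulA Ga (inv a) a (inv a)), gmulV, gmul1. apply gmulV.
Qed.

Lemma gmul_1r a : mul a one = a.
Proof. rewrite <- (gmulV Ga a), gmulA, gmul_inv_r, gmul1. auto. Qed.

Lemma gmul_cancel_l a x y : mul a x = mul a y -> x = y.
Proof.
  intros H. rewrite <- (gmul1 Ga x), <- (gmul1 Ga y), <- (gmulV Ga a), <- !gmulA, H. auto.
Qed.

Lemma gmul_cancel_r a x y : mul x a = mul y a -> x = y.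
Proof.
  intros H. rewrite <- (gmul_1r x), <- (gmul_1r y), <- (gmul_inv_r a), !gmulA, H. auto.
Qed.

Lemma aD_inv g d : aD Ga (inv g) (aD Ga g d) = d.
Proof. rewrite <- aDM, gmulV, aD1. auto. Qed.

Lemma aF_inv g f : aF Ga (inv g) (aF Ga g f) = f.
Proof. rewrite <- aFM, gmulV, aF1. auto. Qed.

(* Orbit-stabiliser for a subgroup [S] acting through a relation [act] on a
   list [O] of points, the orbit of [e], whose stabiliser is [Hs]. *)
Lemma orbit_stabilizer (S Hs : G Ga -> Prop) {E} (act : G Ga -> E -> E -> Prop) (e : E)
  (O : list E) n m :
  NoDup O ->
  (forall g e1 e2, S g -> act g e e1 -> act g e e2 -> e1 = e2) ->
  (forall g, S g -> exists e', In e' O /\ act g e e') ->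
  (forall e', In e' O -> exists g, S g /\ act g e e') ->
  (forall g h, S g -> S h -> S (mul g h)) ->
  (forall g e' h, S g -> act g e e' -> Hs h -> act (mul g h) e e') ->
  (forall g g' e', S g -> S g' -> act g e e' -> act g' e e' -> Hs (mul (inv g') g)) ->
  (forall h, Hs h -> S h) ->
  cardP S n -> cardP Hs m -> n = length O * m.
Proof.
  intros HO Hfun Hto Hfrom Hmul Hact Hstab Hsub HS [lH [HlH [HiH HmH]]].
  destruct (choice (fun e' g => In e' O -> S g /\ act g e e')) as [gsel Hgs].
  { intros e'. destruct (classic (In e' O)) as [Hin | Hn].
    - destruct (Hfrom e' Hin) as [g Hg]. exists g; auto.
    - exists one; tauto. }
  assert (Hacts : forall e' h, In e' O -> In h lH -> act (mul (gsel e') h) e e').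
  { intros e' h He' Hh. apply Hact; [apply Hgs | apply Hgs | apply HiH]; auto. }
  set (L := flat_map (fun e' => map (mul (gsel e')) lH) O).
  eapply cardP_unique; [exact HS |]. exists L. split; [| split].
  - apply NoDup_flat_map_disjoint; auto.
    + intros e' _. apply NoDup_map_NoDup_ForallPairs; auto.
      intros x y _ _. apply gmul_cancel_l.
    + intros e1 e2 z He1 He2 Hz1 Hz2. apply in_map_iff in Hz1, Hz2.
      destruct Hz1 as [h1 [<- Hh1]], Hz2 as [h2 [E2 Hh2]].
      eapply Hfun; [| apply (Hacts e1 h1) | rewrite <- E2; apply (Hacts e2 h2)]; auto.
      apply Hmul; [apply Hgs | apply Hsub, HiH]; auto.
  - intros g. unfold L. rewrite in_flat_map. split.
    + intros Hg. destruct (Hto g Hg) as [e' [He' Ha]]. exists e'. split; auto.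
      apply in_map_iff. exists (mul (inv (gsel e')) g). split.
      * rewrite gmulA, gmul_inv_r, gmul1; auto.
      * apply HiH. destruct (Hgs e' He'). eapply Hstab; eauto.
    + intros [e' [He' Hm]]. apply in_map_iff in Hm. destruct Hm as [h [<- Hh]].
      apply Hmul; [apply Hgs | apply Hsub, HiH]; auto.
  - unfold L. rewrite (flat_map_constant_length _ _ (c := m)); auto.
    intros; rewrite length_map; auto.
Qed.

Lemma face_stab_card_conj f0 f g0 n : cardP (fun g => aF Ga g f0 = f0) n ->
  aF Ga g0 f0 = f -> cardP (fun g => aF Ga g f = f) n.
Proof.
  intros [l [Hl [Hi Hn]]] Hg0.
  exists (map (fun k => mul g0 (mul k (inv g0))) l). split; [| split].
  - apply NoDup_map_NoDup_ForallPairs; auto. intros a b _ _ H.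
    apply gmul_cancel_l, gmul_cancel_r in H. auto.
  - intros t. rewrite in_map_iff. split.
    + intros Ht. exists (mul (inv g0) (mul t g0)). split.
      * rewrite !gmulA, gmul_inv_r, gmul1, <- gmulA, gmul_inv_r, gmul_1r. auto.
      * apply Hi. rewrite !aFM, Hg0, Ht, <- Hg0, aF_inv. auto.
    + intros [k [<- Hk]]. apply Hi in Hk. rewrite !aFM, <- Hg0, aF_inv, Hk. auto.
  - rewrite length_map; auto.
Qed.

End GroupAction.

Lemma length_filter_map {A B} (f : B -> bool) (g : A -> B) l :
  length (filter f (map g l)) = length (filter (fun a => f (g a)) l).
Proof. induction l as [|a l IH]; simpl; auto. destruct (f (g a)); simpl; auto. Qed.

Lemma length_filter_flat_map {A B} (P : B -> bool) (F : A -> list B) l :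
  length (filter P (flat_map F l)) = list_sum (map (fun a => length (filter P (F a))) l).
Proof. induction l as [|a l IH]; simpl; auto. rewrite filter_app, length_app, IH. auto. Qed.

Lemma list_sum_map_ext {A} (f g : A -> nat) l : (forall a, In a l -> f a = g a) ->
  list_sum (map f l) = list_sum (map g l).
Proof. induction l as [|a l IH]; simpl; intros H; [auto |]. rewrite (H a), IH; auto. Qed.

Lemma list_sum_map_add {A} (f g : A -> nat) l :
  list_sum (map (fun a => f a + g a) l) = list_sum (map f l) + list_sum (map g l).
Proof. induction l as [|a l IH]; simpl; auto. rewrite IH. lia. Qed.

Lemma list_sum_map_mull {A} (c : nat) (f : A -> nat) l :
  list_sum (map (fun a => c * f a) l) = c * list_sum (map f l).
Proof. induction l as [|a l IH]; simpl; auto. rewrite IH. lia. Qed.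

Lemma list_sum_const {A} (c : nat) (l : list A) : list_sum (map (fun _ => c) l) = c * length l.
Proof. induction l as [|a l IH]; simpl; auto. rewrite IH. lia. Qed.

Lemma list_sum_exchange {A B} (f : A -> B -> nat) la lb :
  list_sum (map (fun a => list_sum (map (fun b => f a b) lb)) la) =
  list_sum (map (fun b => list_sum (map (fun a => f a b) la)) lb).
Proof.
  induction la as [|a la IH]; simpl.
  - rewrite (list_sum_const 0 lb). lia.
  - rewrite IH, <- list_sum_map_add. reflexivity.
Qed.

Lemma list_sum_divide p {A} (f : A -> nat) l : (forall a, In a l -> Nat.divide p (f a)) ->
  Nat.divide p (list_sum (map f l)).
Proof.
  induction l as [|a l IH]; simpl; intros H; [apply Nat.divide_0_r |].
  apply Nat.divide_add_r; auto.
Qed.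

Definition count_value {T} (N : T -> nat) (l : list T) (k : nat) : nat :=
  list_sum (map (fun y => Nat.b2n (N y =? k)) l).

Lemma count_value_large {T} (N : T -> nat) l k :
  (forall y, In y l -> N y < k) -> count_value N l k = 0.
Proof.
  intros H. unfold count_value. rewrite (list_sum_map_ext _ (fun _ => 0)).
  - rewrite list_sum_const. lia.
  - intros a Ha. specialize (H a Ha). destruct (Nat.eqb_spec (N a) k); [lia | auto].
Qed.

Lemma list_sum_indicator_seq n B : 1 <= n -> n <= B ->
  list_sum (map (fun k => Nat.b2n (n =? k)) (seq 1 B)) = 1.
Proof.
  revert n. induction B as [|B IH]; intros n H1 H2; [lia |].
  rewrite seq_S, map_app, list_sum_app. simpl.
  destruct (Nat.eq_dec n (S B)) as [-> | E].
  - rewrite (list_sum_map_ext _ (fun _ => 0)).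
    + rewrite list_sum_const, Nat.eqb_refl. simpl. lia.
    + intros a Ha. apply in_seq in Ha. destruct (Nat.eqb_spec (S B) a); [lia | auto].
  - rewrite IH by lia. rewrite (proj2 (Nat.eqb_neq n (S B)) E). simpl. lia.
Qed.

(* The counts vanish for large [k], so descending induction on [k]
   shows that [p] divides each of them; [length l] is their sum. *)
Lemma divide_length_by_descent {T} p (l : list T) (N : T -> nat) (Nf : nat -> nat) :
  (forall y, In y l -> 1 <= N y) ->
  (forall k, 1 <= k -> p * Nf k =
     count_value N l k + 2 * count_value N l (2 * k) + count_value N l (4 * k)) ->
  Nat.divide p (length l).
Proof.
  intros H1 Heq.
  set (B := list_sum (map N l)).
  assert (HB : forall y, In y l -> N y <= B).
  { unfold B. clear. induction l as [|a l IH]; simpl; intros y Hy; [tauto |].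
    destruct Hy as [<- | Hy]; [lia |]. specialize (IH y Hy). lia. }
  assert (Hd : forall d k, 1 <= k -> B < k + d -> Nat.divide p (count_value N l k)).
  { induction d as [|d IH]; intros k Hk Hkd.
    - rewrite count_value_large; [apply Nat.divide_0_r |].
      intros y Hy. specialize (HB y Hy). lia.
    - apply (Nat.divide_add_cancel_r _ (2 * count_value N l (2 * k) + count_value N l (4 * k))).
      + apply Nat.divide_add_r; [apply Nat.divide_mul_r |]; apply IH; lia.
      + rewrite Nat.add_comm, Nat.add_assoc, <- (Heq k Hk). apply Nat.divide_factor_l. }
  assert (Hlen : length l = list_sum (map (count_value N l) (seq 1 B))).
  { unfold count_value. rewrite list_sum_exchange, (list_sum_map_ext _ (fun _ => 1)).
    - rewrite list_sum_const. lia.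
    - intros y Hy. apply list_sum_indicator_seq; auto. }
  rewrite Hlen. apply list_sum_divide. intros k Hk. apply in_seq in Hk. apply (Hd (S B)); lia.
Qed.

Lemma double_count {V T} (e : V -> nat -> T) (n : nat) (lV : list V) (lT : list T)
  (P : T -> bool) :
  NoDup lV -> (forall y, In y lV) -> NoDup lT ->
  (forall y y' c c', c < n -> c' < n -> e y c = e y' c' -> y = y' /\ c = c') ->
  (forall t, In t lT <-> exists y c, c < n /\ e y c = t) ->
  list_sum (map (fun y => length (filter (fun c => P (e y c)) (seq 0 n))) lV) =
  length (filter P lT).
Proof.
  intros HnV HaV HnT Hinj Hsurj.
  set (L := flat_map (fun y => map (e y) (seq 0 n)) lV).
  transitivity (length (filter P L)).
  { unfold L. rewrite length_filter_flat_map. apply list_sum_map_ext.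
    intros y _. rewrite length_filter_map. reflexivity. }
  apply NoDup_length_eq; [apply NoDup_filter | apply NoDup_filter, HnT |].
  - apply NoDup_flat_map_disjoint; auto.
    + intros y _. apply NoDup_map_NoDup_ForallPairs; [| apply seq_NoDup].
      intros c c' Hc Hc' E. apply in_seq in Hc, Hc'. apply (Hinj y y); auto; lia.
    + intros y y' z _ _ Hz Hz'. apply in_map_iff in Hz, Hz'.
      destruct Hz as [c [<- Hc]], Hz' as [c' [E Hc']]. apply in_seq in Hc, Hc'.
      symmetry. apply (Hinj y' y c' c); auto; lia.
  - intros t. rewrite !filter_In. unfold L. rewrite in_flat_map, Hsurj.
    split; intros [Ht HP]; split; auto.
    + destruct Ht as [y [_ Ht]]. apply in_map_iff in Ht. destruct Ht as [c [Et Hc]].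
      apply in_seq in Hc. exists y, c. split; auto; lia.
    + destruct Ht as [y [c [Hc Et]]]. exists y. split; auto.
      apply in_map_iff. exists c. split; auto. apply in_seq. lia.
Qed.

Lemma bij_on_inverse {T U} (A : T -> Prop) (B : U -> Prop) (h : T -> U) (b0 : U) :
  B b0 -> bij_on A B h -> exists k : U -> T, forall b, B b -> A (k b) /\ h (k b) = b.
Proof.
  intros Hb0 [_ [_ Hs]].
  apply (choice (fun b t => B b -> A t /\ h t = b)). intros b.
  destruct (classic (B b)) as [Hb | Hb].
  - destruct (Hs b Hb) as [t Ht]. exists t. auto.
  - destruct (Hs b0 Hb0) as [t _]. exists t. tauto.
Qed.

Lemma count_darts {p} (Y : cx p) (al : cV Y -> cD Y -> nat) (lV : list (cV Y))
  (lD : list (cD Y)) :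
  (forall y, bij_on (fun d => src d = y) C4_V (al y)) ->
  NoDup lV -> (forall y, In y lV) -> NoDup lD -> (forall d, In d lD) ->
  length lD = 4 * length lV.
Proof.
  intros Hal HnV HaV HnD HaD.
  destruct (choice (fun y k => forall c, C4_V c -> src (k c) = y /\ al y (k c) = c))
    as [dart Hdart].
  { intros y. apply (bij_on_inverse (fun d => src d = y) C4_V (al y) 0);
      [unfold C4_V; lia | apply Hal]. }
  rewrite <- (filter_true lD), <- (double_count dart 4 lV lD (fun _ => true)); auto.
  - rewrite (list_sum_map_ext _ (fun _ => 4)); [apply list_sum_const |].
    intros y _. rewrite filter_true. apply length_seq.
  - intros y y' c c' Hc Hc' E.
    destruct (Hdart y c Hc) as [S1 L1], (Hdart y' c' Hc') as [S2 L2].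
    assert (y = y') as <- by congruence. split; congruence.
  - intros d. split; intros _; auto.
    destruct (Hal (src d)) as [Hb1 [Hb2 _]].
    assert (Hc : al (src d) d < 4) by (apply Hb1; auto).
    exists (src d), (al (src d) d). split; auto.
    destruct (Hdart (src d) _ Hc) as [S L]. apply Hb2; auto.
Qed.

Lemma count_corners {p} (Y : cx p) (be : cV Y -> cF Y * nat -> nat)
  (cor : cV Y -> nat -> cF Y * nat) (lV : list (cV Y)) (lF : list (cF Y)) (P : cF Y -> bool) :
  (forall y, bij_on (fun c => snd c < p /\ src (bd (fst c) (snd c)) = y) C4_E (be y)) ->
  (forall y c, c < 4 ->
     snd (cor y c) < p /\ src (bd (fst (cor y c)) (snd (cor y c))) = y /\ be y (cor y c) = c) ->
  NoDup lV -> (forall y, In y lV) -> NoDup lF -> (forall h, In h lF) ->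
  list_sum (map (fun y => length (filter (fun c => P (fst (cor y c))) (seq 0 4))) lV) =
  p * length (filter P lF).
Proof.
  intros Hbe Hcor HnV HaV HnF HaF.
  set (L := flat_map (fun h => map (pair h) (seq 0 p)) lF).
  transitivity (length (filter (fun hj => P (fst hj)) L)).
  - apply (double_count cor 4 lV L (fun hj => P (fst hj))); auto.
    + apply NoDup_flat_map_disjoint; auto.
      * intros h _. apply NoDup_map_NoDup_ForallPairs; [| apply seq_NoDup].
        intros j j' _ _ E. injection E; auto.
      * intros h h' z _ _ Hz Hz'. apply in_map_iff in Hz, Hz'.
        destruct Hz as [j [<- _]], Hz' as [j' [E _]]. injection E; auto.
    + intros y y' c c' Hc Hc' E.
      destruct (Hcor y c Hc) as [_ [S1 L1]], (Hcor y' c' Hc') as [_ [S2 L2]].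
      assert (y = y') as <- by (rewrite <- S1, <- S2, E; auto). split; congruence.
    + intros [h j]. unfold L. rewrite in_flat_map. split.
      * intros [h' [_ Hj]]. apply in_map_iff in Hj. destruct Hj as [j' [E Hj]].
        injection E; intros -> ->. apply in_seq in Hj.
        destruct (Hbe (src (bd h j))) as [Hb1 [Hb2 _]].
        assert (Hc : be (src (bd h j)) (h, j) < 4) by (apply (Hb1 (h, j)); simpl; split; auto; lia).
        exists (src (bd h j)), (be (src (bd h j)) (h, j)). split; auto.
        destruct (Hcor (src (bd h j)) _ Hc) as [L1 [L2 L3]].
        apply Hb2; simpl; auto; split; auto; lia.
      * intros [y [c [Hc E]]]. destruct (Hcor y c Hc) as [L1 _]. rewrite E in L1.
        exists h. split; auto. apply in_map_iff. exists j. split; auto. apply in_seq. simpl in L1. lia.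
  - unfold L. rewrite length_filter_flat_map. clear -lF. induction lF as [|h l IH]; simpl; [lia |].
    rewrite IH, length_filter_map. simpl. destruct (P h).
    + rewrite filter_true, length_seq. simpl. lia.
    + rewrite filter_false. simpl. lia.
Qed.

Lemma C4_link_choice {p} (Y : cx p) : (forall y, link_iso Y y C4_V C4_E C4_ends) ->
  exists (al : cV Y -> cD Y -> nat) (be : cV Y -> cF Y * nat -> nat)
         (cor : cV Y -> nat -> cF Y * nat), forall y,
    bij_on (fun d => src d = y) C4_V (al y) /\
    bij_on (fun c => snd c < p /\ src (bd (fst c) (snd c)) = y) C4_E (be y) /\
    (forall h j, j < p -> src (bd h j) = y ->
       ueq (pmap (al y) (corner h j)) (C4_ends (be y (h, j)))) /\
    (forall c, c < 4 ->
       snd (cor y c) < p /\ src (bd (fst (cor y c)) (snd (cor y c))) = y /\ be y (cor y c) = c).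
Proof.
  intros HY.
  destruct (choice (fun (y : cV Y) (al : cD Y -> nat) => exists be,
     bij_on (fun d => src d = y) C4_V al /\
     bij_on (fun c => snd c < p /\ src (bd (fst c) (snd c)) = y) C4_E be /\
     (forall h j, j < p -> src (bd h j) = y ->
        ueq (pmap al (corner h j)) (C4_ends (be (h, j)))))) as [al Hal].
  { intros y. destruct (HY y) as [al [be [H1 [H2 H3]]]]. exists al, be.
    pose proof (link_iso_corner Y y C4_V C4_E C4_ends al be H3). auto. }
  destruct (choice _ Hal) as [be Hbe].
  destruct (choice (fun (y : cV Y) (k : nat -> cF Y * nat) => forall c, C4_E c ->
      (snd (k c) < p /\ src (bd (fst (k c)) (snd (k c))) = y) /\ be y (k c) = c))
    as [cor Hcor].
  { intros y.
    apply (bij_on_inverse (fun c => snd c < p /\ src (bd (fst c) (snd c)) = y) C4_E (be y) 0);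
      [unfold C4_E; lia | apply Hbe]. }
  exists al, be, cor. intros y. destruct (Hbe y) as [H1 [H2 H3]].
  split; [| split; [| split]]; auto.
  intros c Hc. destruct (Hcor y c Hc) as [[A1 A2] A3]. auto.
Qed.

Definition C4_edgeb (u v c : nat) : bool :=
  ((u =? c) && (v =? S c mod 4)) || ((u =? S c mod 4) && (v =? c)).
Definition K33_edges : list (nat * nat) := list_prod (seq 0 3) (seq 0 3).

(* [qa] and [qb] label the two sides of [K_{3,3}] by vertices of [C_4];
   [fiber_size qa qb c] counts the edges of [K_{3,3}] sent onto the edge [c]. *)Definition fiber_size (qa qb : nat -> nat) (c : nat) : nat :=
  length (filter (fun ab => C4_edgeb (qa (fst ab)) (qb (snd ab)) c) K33_edges).
Definition count_fibers (qa qb : nat -> nat) (v : nat) : nat :=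
  length (filter (fun c => fiber_size qa qb c =? v) (seq 0 4)).

Definition link_mapb (qa qb : nat -> nat) : bool :=
  forallb (fun ab => existsb (C4_edgeb (qa (fst ab)) (qb (snd ab))) (seq 0 4)) K33_edges &&
  forallb (fun t => existsb (fun a => qa a =? t) (seq 0 3) ||
                    existsb (fun b => qb b =? t) (seq 0 3)) (seq 0 4).
Definition fibers_1224b (qa qb : nat -> nat) : bool :=
  (count_fibers qa qb 1 =? 1) && (count_fibers qa qb 2 =? 2) && (count_fibers qa qb 4 =? 1) &&
  forallb (fun c => (fiber_size qa qb c =? 1) || (fiber_size qa qb c =? 2) ||
                    (fiber_size qa qb c =? 4)) (seq 0 4).

Definition label3 (a0 a1 a2 : nat) (a : nat) : nat := nth a [a0; a1; a2] 0.
Definition forall_lt4 (P : nat -> bool) : bool := forallb P (seq 0 4).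

Lemma forall_lt4_spec P a : a < 4 -> forall_lt4 P = true -> P a = true.
Proof. unfold forall_lt4. rewrite forallb_forall. intros Ha H. apply H, in_seq. lia. Qed.

Definition link_maps_K33_C4_checked : bool :=
  forall_lt4 (fun a0 => forall_lt4 (fun a1 => forall_lt4 (fun a2 =>
  forall_lt4 (fun b0 => forall_lt4 (fun b1 => forall_lt4 (fun b2 =>
    let qa := label3 a0 a1 a2 in let qb := label3 b0 b1 b2 in
    implb (link_mapb qa qb) (fibers_1224b qa qb))))))).

Lemma link_maps_K33_C4_checked_true : link_maps_K33_C4_checked = true.
Proof. vm_compute. reflexivity. Qed.

Lemma link_map_fibers_1224b qa qb :
  (forall a, a < 3 -> qa a < 4) -> (forall b, b < 3 -> qb b < 4) ->
  link_mapb qa qb = true -> fibers_1224b qa qb = true.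
Proof.
  intros Ha Hb Hl.
  pose proof link_maps_K33_C4_checked_true as H. unfold link_maps_K33_C4_checked in H.
  apply (forall_lt4_spec _ (qa 0)) in H; [| apply Ha; lia].
  apply (forall_lt4_spec _ (qa 1)) in H; [| apply Ha; lia].
  apply (forall_lt4_spec _ (qa 2)) in H; [| apply Ha; lia].
  apply (forall_lt4_spec _ (qb 0)) in H; [| apply Hb; lia].
  apply (forall_lt4_spec _ (qb 1)) in H; [| apply Hb; lia].
  apply (forall_lt4_spec _ (qb 2)) in H; [| apply Hb; lia].
  (* Both tests only evaluate the labels at [0], [1] and [2]. *)
  change (implb (link_mapb qa qb) (fibers_1224b qa qb) = true) in H.
  rewrite Hl in H. exact H.
Qed.

Lemma C4_edgeb_ueq u v c : C4_edgeb u v c = true <-> ueq (u, v) (C4_ends c).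
Proof.
  unfold C4_edgeb, ueq, C4_ends; simpl.
  rewrite orb_true_iff, !andb_true_iff, !Nat.eqb_eq. tauto.
Qed.

Lemma C4_edgeb_lt4 u v c : c < 4 -> C4_edgeb u v c = true -> u < 4 /\ v < 4.
Proof.
  intros Hc Hm. pose proof (Nat.mod_upper_bound (S c) 4 ltac:(lia)).
  unfold C4_edgeb in Hm. rewrite orb_true_iff, !andb_true_iff, !Nat.eqb_eq in Hm. lia.
Qed.

Lemma in_K33_edges a b : In (a, b) K33_edges <-> a < 3 /\ b < 3.
Proof. unfold K33_edges. rewrite in_prod_iff, !in_seq. lia. Qed.

Lemma K33_edges_NoDup : NoDup K33_edges.
Proof. repeat constructor; simpl; intuition discriminate. Qed.

(* A map of links [K_{3,3} -> C_4], onto the vertices, has edge fibres of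
   sizes [1, 2, 2, 4]. *)
Lemma link_map_K33_C4_fibers (qa qb : nat -> nat) :
  (forall a b, a < 3 -> b < 3 -> exists c, c < 4 /\ C4_edgeb (qa a) (qb b) c = true) ->
  (forall t, t < 4 -> (exists a, a < 3 /\ qa a = t) \/ (exists b, b < 3 /\ qb b = t)) ->
  count_fibers qa qb 1 = 1 /\ count_fibers qa qb 2 = 2 /\ count_fibers qa qb 4 = 1 /\
  (forall c, c < 4 ->
     fiber_size qa qb c = 1 \/ fiber_size qa qb c = 2 \/ fiber_size qa qb c = 4).
Proof.
  intros Hadj Hcov.
  assert (Hl : link_mapb qa qb = true).
  { unfold link_mapb. rewrite andb_true_iff, !forallb_forall. split.
    - intros [a b] Hab. apply in_K33_edges in Hab.
      destruct (Hadj a b ltac:(lia) ltac:(lia)) as [c [Hc Hm]].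
      apply existsb_exists. exists c. split; auto. apply in_seq; lia.
    - intros t Ht. apply in_seq in Ht. rewrite orb_true_iff, !existsb_exists.
      destruct (Hcov t ltac:(lia)) as [[a [Ha E]] | [b [Hb E]]]; [left; exists a | right; exists b];
        rewrite in_seq, Nat.eqb_eq; split; auto; lia. }
  assert (Hf : fibers_1224b qa qb = true).
  { apply link_map_fibers_1224b; auto.
    - intros a Ha. destruct (Hadj a 0 Ha ltac:(lia)) as [c [Hc Hm]].
      apply (C4_edgeb_lt4 _ _ _ Hc Hm).
    - intros b Hb. destruct (Hadj 0 b ltac:(lia) Hb) as [c [Hc Hm]].
      apply (C4_edgeb_lt4 _ _ _ Hc Hm). }
  unfold fibers_1224b in Hf. rewrite !andb_true_iff, !Nat.eqb_eq, forallb_forall in Hf.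
  destruct Hf as [[[H1 H2] H4] Hall]. repeat split; auto.
  intros c Hc. specialize (Hall c ltac:(apply in_seq; lia)).
  rewrite !orb_true_iff, !Nat.eqb_eq in Hall. tauto.
Qed.

Lemma length_filter_seq4 (f : nat -> bool) :
  length (filter f (seq 0 4)) = Nat.b2n (f 0) + Nat.b2n (f 1) + Nat.b2n (f 2) + Nat.b2n (f 3).
Proof. simpl. destruct (f 0), (f 1), (f 2), (f 3); simpl; lia. Qed.

Lemma count_fiber_products (o : nat -> nat) (N m : nat) :
  (forall c, c < 4 -> o c = 1 \/ o c = 2 \/ o c = 4) ->
  length (filter (fun c => o c =? 1) (seq 0 4)) = 1 ->
  length (filter (fun c => o c =? 2) (seq 0 4)) = 2 ->
  length (filter (fun c => o c =? 4) (seq 0 4)) = 1 ->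
  length (filter (fun c => N =? o c * m) (seq 0 4)) =
    Nat.b2n (N =? m) + 2 * Nat.b2n (N =? 2 * m) + Nat.b2n (N =? 4 * m).
Proof.
  intros Ho H1 H2 H4. rewrite length_filter_seq4 in *.
  destruct (Ho 0 ltac:(lia)) as [E0 | [E0 | E0]]; destruct (Ho 1 ltac:(lia)) as [E1 | [E1 | E1]];
  destruct (Ho 2 ltac:(lia)) as [E2 | [E2 | E2]]; destruct (Ho 3 ltac:(lia)) as [E3 | [E3 | E3]];
  rewrite ?E0, ?E1, ?E2, ?E3 in *; simpl in H1, H2, H4; try lia;
  rewrite ?Nat.mul_1_l; lia.
Qed.

Section Kvv3Quotient.
Variable p : nat.
Hypothesis Hp : 2 < p.
Variables X Y : cx p.
Variable Ga : action X.
Variables (pV : cV X -> cV Y) (pD : cD X -> cD Y) (pF : cF X -> cF Y).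
Hypothesis HX : forall x : cV X, link_iso X x (Kvv_V 3) (Kvv_E 3) Kvv_ends.
Hypothesis HY : forall y : cV Y, link_iso Y y C4_V C4_E C4_ends.
Hypothesis Hm : is_morph X Y pV pD pF.
Hypothesis HsD : forall e, exists d, pD d = e.
Hypothesis HiV : forall x x', pV x = pV x' <-> exists g, aV Ga g x = x'.
Hypothesis HiD : forall d d', pD d = pD d' <-> exists g, aD Ga g d = d'.
Hypothesis HiF : forall f f', pF f = pF f' <-> exists g, aF Ga g f = f'.
Hypothesis Hfin : forall f, finite_pred (fun g => aF Ga g f = f).

Lemma src_aD g d : src (aD Ga g d) = aV Ga g (src d).
Proof. destruct (a_morph Ga g) as [HV _]. auto. Qed.

Lemma aF_corner g f i : exists j, j < p /\
  ueq (corner (aF Ga g f) j) (pmap (aD Ga g) (corner f i)).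
Proof.
  destruct (morph_corner_ueq X X _ _ _ ltac:(lia) (a_morph Ga g) f) as [s [k H]].
  destruct (reindex_ex p s k i ltac:(lia)) as [j [Hj Hr]]. exists j; auto.
Qed.

Section VertexStar.
Variable x : cV X.
Variables (alY : cD Y -> nat) (beY : cF Y * nat -> nat) (corY : nat -> cF Y * nat).
Hypothesis HalY : bij_on (fun d => src d = pV x) C4_V alY.
Hypothesis HbeY :
  bij_on (fun c => snd c < p /\ src (bd (fst c) (snd c)) = pV x) C4_E beY.
Hypothesis HenY : forall h j, j < p -> src (bd h j) = pV x ->
  ueq (pmap alY (corner h j)) (C4_ends (beY (h, j))).
Hypothesis HcorY : forall c, c < 4 ->
  snd (corY c) < p /\ src (bd (fst (corY c)) (snd (corY c))) = pV x /\ beY (corY c) = c.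

Lemma corY_beY h j : j < p -> src (bd h j) = pV x -> corY (beY (h, j)) = (h, j).
Proof.
  intros Hj Hs. destruct HbeY as [Hb1 [Hb2 _]].
  assert (Hc : beY (h, j) < 4) by (apply (Hb1 (h, j)); simpl; auto).
  destruct (HcorY _ Hc) as [A1 [A2 A3]]. apply Hb2; simpl; auto.
Qed.

Lemma corner_image f i : src (bd f i) = x -> exists c, c < 4 /\
   ueq (corner (fst (corY c)) (snd (corY c))) (pmap pD (corner f i)) /\
   fst (corY c) = pF f /\
   ueq (pmap alY (pmap pD (corner f i))) (C4_ends c).
Proof.
  intros Hx.
  destruct (morph_corner_ueq X Y pV pD pF ltac:(lia) Hm f) as [s [k H]].
  destruct (reindex_ex p s k i ltac:(lia)) as [j [Hj Hr]].
  specialize (H i j Hr).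
  assert (Hs : src (bd (pF f) j) = pV x).
  { destruct Hm as [HV _]. rewrite <- Hx, HV.
    destruct H as [[E1 E2] | [E1 E2]]; unfold corner, pmap in *; simpl in *.
    - rewrite E2. auto.
    - rewrite E2, <- !HV. f_equal. apply (src_corner1 X f i ltac:(lia)). }
  destruct HbeY as [Hb1 _].
  exists (beY (pF f, j)). rewrite (corY_beY _ _ Hj Hs). simpl.
  split; [apply (Hb1 (pF f, j)); simpl; auto |]. split; auto. split; auto.
  eapply ueq_trans; [apply ueq_pmap, ueq_sym, H |]. apply HenY; auto.
Qed.

Section LinkOfX.
Variables (alX : cD X -> bool * nat) (beX : cF X * nat -> nat * nat).
Hypothesis HalX : bij_on (fun d => src d = x) (Kvv_V 3) alX.
Hypothesis HbeX : bij_on (fun c => snd c < p /\ src (bd (fst c) (snd c)) = x) (Kvv_E 3) beX.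
Hypothesis HenX : forall f i, i < p -> src (bd f i) = x ->
  ueq (pmap alX (corner f i)) (Kvv_ends (beX (f, i))).
Variables U W : nat -> cD X.
Hypothesis HU : forall a, a < 3 -> src (U a) = x /\ alX (U a) = (false, a).
Hypothesis HW : forall b, b < 3 -> src (W b) = x /\ alX (W b) = (true, b).

Definition qa a := alY (pD (U a)).
Definition qb b := alY (pD (W b)).

Lemma corner_UW f i : i < p -> src (bd f i) = x -> exists a b, a < 3 /\ b < 3 /\
  beX (f, i) = (a, b) /\ ueq (corner f i) (U a, W b).
Proof.
  intros Hi Hs. destruct HbeX as [Hb1 _].
  assert (HE : Kvv_E 3 (beX (f, i))) by (apply (Hb1 (f, i)); simpl; auto).
  destruct (beX (f, i)) as [a b] eqn:Eb. unfold Kvv_E in HE; simpl in HE.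
  exists a, b. split; [lia | split; [lia | split; auto]].
  destruct (HU a ltac:(lia)) as [Ua1 Ua2], (HW b ltac:(lia)) as [Wb1 Wb2].
  assert (Hc1 : src (fst (corner f i)) = x) by (rewrite src_corner1; auto; lia).
  apply (ueq_pmap_inj_on (fun d => src d = x) alX); auto.
  - apply HalX.
  - pose proof (HenX f i Hi Hs) as Hh. rewrite Eb in Hh.
    unfold pmap at 2. simpl. rewrite Ua2, Wb2. exact Hh.
Qed.

Lemma UW_corner a b : a < 3 -> b < 3 ->
  exists f i, i < p /\ src (bd f i) = x /\ ueq (corner f i) (U a, W b).
Proof.
  intros Ha Hb. destruct HbeX as [_ [_ Hb3]].
  destruct (Hb3 (a, b) ltac:(unfold Kvv_E; simpl; lia)) as [[f i] [[Hi Hs] Eb]].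
  simpl in *. exists f, i. split; auto. split; auto.
  destruct (corner_UW f i Hi Hs) as [a' [b' [_ [_ [Eb' Hu]]]]]. rewrite Eb in Eb'.
  injection Eb'; intros; subst; auto.
Qed.

Lemma UW_inj a b a' b' : a < 3 -> b < 3 -> a' < 3 -> b' < 3 ->
  ueq (U a, W b) (U a', W b') -> a = a' /\ b = b'.
Proof.
  intros Ha Hb Ha' Hb' [[E1 E2] | [E1 E2]]; simpl in *; apply (f_equal alX) in E1.
  - apply (f_equal alX) in E2.
    rewrite (proj2 (HU a Ha)), (proj2 (HU a' Ha')) in E1.
    rewrite (proj2 (HW b Hb)), (proj2 (HW b' Hb')) in E2.
    injection E1; injection E2; auto.
  - rewrite (proj2 (HU a Ha)), (proj2 (HW b' Hb')) in E1. discriminate.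
Qed.

Lemma pmap_alY_UW a b : pmap alY (pmap pD (U a, W b)) = (qa a, qb b).
Proof. reflexivity. Qed.

Lemma qa_qb_adj a b : a < 3 -> b < 3 ->
  exists c, c < 4 /\ C4_edgeb (qa a) (qb b) c = true.
Proof.
  intros Ha Hb. destruct (UW_corner a b Ha Hb) as [f [i [Hi [Hs Hu]]]].
  destruct (corner_image f i Hs) as [c [Hc [_ [_ Hq]]]].
  exists c. split; auto. apply C4_edgeb_ueq. eapply ueq_trans; [| exact Hq].
  rewrite <- pmap_alY_UW. apply ueq_pmap, ueq_pmap, ueq_sym; auto.
Qed.

Lemma qa_qb_cover t : t < 4 ->
  (exists a, a < 3 /\ qa a = t) \/ (exists b, b < 3 /\ qb b = t).
Proof.
  intros Ht. destruct HalY as [_ [_ Ha3]].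
  destruct (Ha3 t ltac:(unfold C4_V; lia)) as [e [He Et]].
  destruct (HsD e) as [d Ed].
  assert (Hsd : pV (src d) = pV x).
  { destruct Hm as [HV _]. rewrite HV, Ed. auto. }
  apply HiV in Hsd. destruct Hsd as [g Hg].
  set (d' := aD Ga g d).
  assert (Hs' : src d' = x) by (unfold d'; rewrite src_aD; auto).
  assert (Ed' : pD d' = e) by (unfold d'; rewrite (pD_aD p X Y Ga pD HiD); auto).
  destruct HalX as [Ha1 [Ha2 _]]. pose proof (Ha1 d' Hs') as Hk. unfold Kvv_V in Hk.
  destruct (alX d') as [[] n] eqn:Ea; simpl in Hk; [right | left]; exists n; split; auto.
  - destruct (HW n Hk) as [W1 W2].
    assert (W n = d') by (apply Ha2; auto; rewrite W2; auto). unfold qb. congruence.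
  - destruct (HU n Hk) as [U1 U2].
    assert (U n = d') by (apply Ha2; auto; rewrite U2; auto). unfold qa. congruence.
Qed.

(* The stabiliser of [x] acts on the edges [(a, b)] of its link. *)
Definition act_edge (g : G Ga) (e e' : nat * nat) : Prop :=
  fst e' < 3 /\ snd e' < 3 /\
  ueq (pmap (aD Ga g) (U (fst e), W (snd e))) (U (fst e'), W (snd e')).

Lemma act_edge_fun g e e1 e2 : act_edge g e e1 -> act_edge g e e2 -> e1 = e2.
Proof.
  destruct e1 as [a1 b1], e2 as [a2 b2]. intros [A1 [B1 H1]] [A2 [B2 H2]]. simpl in *.
  destruct (UW_inj a1 b1 a2 b2 A1 B1 A2 B2) as [-> ->]; auto.
  eapply ueq_trans; [apply ueq_sym; exact H1 | exact H2].
Qed.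

Lemma act_edge_ex g a b : aV Ga g x = x -> a < 3 -> b < 3 -> exists e', act_edge g (a, b) e'.
Proof.
  intros Hg Ha Hb. destruct (UW_corner a b Ha Hb) as [f [i [Hi [Hs Hu]]]].
  destruct (aF_corner g f i) as [j [Hj H]].
  assert (Hc : ueq (corner (aF Ga g f) j) (pmap (aD Ga g) (U a, W b))).
  { eapply ueq_trans; [exact H |]. apply ueq_pmap; auto. }
  assert (Hs' : src (bd (aF Ga g f) j) = x).
  { destruct (ueq_forall (fun d => src d = x) _ _ Hc) as [_ Hx]; simpl; auto.
    - rewrite src_aD, (proj1 (HU a Ha)); auto.
    - rewrite src_aD, (proj1 (HW b Hb)); auto. }
  destruct (corner_UW _ _ Hj Hs') as [a' [b' [Ha' [Hb' [_ Hu']]]]].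
  exists (a', b'). split; auto. split; auto.
  eapply ueq_trans; [apply ueq_sym; exact Hc | exact Hu'].
Qed.

Lemma act_edge_labels g e e' :
  act_edge g e e' -> ueq (qa (fst e), qb (snd e)) (qa (fst e'), qb (snd e')).
Proof.
  intros [_ [_ H]]. unfold qa, qb.
  apply (ueq_pmap (fun d => alY (pD d))) in H. unfold pmap in H; simpl in H.
  rewrite !(pD_aD p X Y Ga pD HiD) in H. exact H.
Qed.

Lemma corner_over_c f i a b c : src (bd f i) = x -> ueq (corner f i) (U a, W b) ->
  c < 4 -> C4_edgeb (qa a) (qb b) c = true ->
  fst (corY c) = pF f /\ ueq (corner (fst (corY c)) (snd (corY c))) (pmap pD (corner f i)).
Proof.
  intros Hs Hu Hc Hm4. destruct (corner_image f i Hs) as [c1 [Hc1 [H1 [H2 H3]]]].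
  enough (c1 = c) by (subst; auto).
  apply C4_ends_inj; auto. eapply ueq_trans; [apply ueq_sym; exact H3 |].
  eapply ueq_trans; [| apply C4_edgeb_ueq; exact Hm4].
  rewrite <- pmap_alY_UW. apply ueq_pmap, ueq_pmap; auto.
Qed.

(* Two edges of the link of [x] over the same edge of the link of [pV x] come
   from corners of faces in the same orbit, and the element identifying the
   faces identifies the corners, because corners of one face have distinct
   images. *)
Lemma act_edge_transitive a b a' b' c : a < 3 -> b < 3 -> a' < 3 -> b' < 3 -> c < 4 ->
  C4_edgeb (qa a) (qb b) c = true -> C4_edgeb (qa a') (qb b') c = true ->
  exists g, aV Ga g x = x /\ act_edge g (a, b) (a', b').
Proof.
  intros Ha Hb Ha' Hb' Hc M1 M2.
  destruct (UW_corner a b Ha Hb) as [f [i [Hi [Hs Hu]]]].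
  destruct (UW_corner a' b' Ha' Hb') as [f' [i' [Hi' [Hs' Hu']]]].
  destruct (corner_over_c f i a b c Hs Hu Hc M1) as [F1 G1].
  destruct (corner_over_c f' i' a' b' c Hs' Hu' Hc M2) as [F2 G2].
  assert (Hff : pF f = pF f') by congruence.
  apply HiF in Hff. destruct Hff as [g Hg].
  destruct (aF_corner g f i) as [j [Hj H]]. rewrite Hg in H.
  assert (Hmj : modeq p j i').
  { apply (pD_corner_inj p Hp X Y pV pD pF HY Hm f').
    eapply ueq_trans; [apply ueq_pmap; exact H |].
    rewrite (pmap_pD_aD p X Y Ga pD HiD).
    eapply ueq_trans; [apply ueq_sym; exact G1 | exact G2]. }
  rewrite (corner_modeq X f' j i' Hmj) in H.
  assert (Hact : ueq (pmap (aD Ga g) (U a, W b)) (U a', W b')).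
  { eapply ueq_trans; [| exact Hu']. eapply ueq_trans; [| apply ueq_sym; exact H].
    apply ueq_pmap, ueq_sym; auto. }
  exists g. split; [| split; auto].
  destruct (ueq_forall (fun d => src d = x) _ _ Hact) as [Hx _]; [apply HU | apply HW |]; auto.
  simpl in Hx. rewrite src_aD, (proj1 (HU a Ha)) in Hx. auto.
Qed.

Lemma act_edge_fixed_stab f i a b g : i < p -> src (bd f i) = x ->
  ueq (corner f i) (U a, W b) -> act_edge g (a, b) (a, b) -> aF Ga g f = f.
Proof.
  intros Hi Hs Hu [_ [_ Ha]]. simpl in Ha.
  destruct (aF_corner g f i) as [j [Hj H]].
  assert (Hc : ueq (corner (aF Ga g f) j) (corner f i)).
  { eapply ueq_trans; [exact H |]. eapply ueq_trans; [apply ueq_pmap; exact Hu |].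
    eapply ueq_trans; [exact Ha | apply ueq_sym; auto]. }
  assert (Hs' : src (bd (aF Ga g f) j) = x).
  { destruct (ueq_forall (fun d => src d = x) _ _ Hc) as [_ Hx]; auto.
    rewrite src_corner1; auto; lia. }
  apply (Kvv_corner_inj X 3 x ltac:(lia) (HX x) _ _ _ _ Hj Hi Hs' Hc).
Qed.

Lemma face_stab_fixes_UW f i a b h : ueq (corner f i) (U a, W b) -> aF Ga h f = f ->
  pmap (aD Ga h) (U a, W b) = (U a, W b).
Proof.
  intros Hu Hh. pose proof (face_stab_fixes_corner p Hp X Y Ga pV pD pF HY Hm HiD h f i Hh) as E.
  unfold pmap in *; simpl in *.
  destruct Hu as [[E1 E2] | [E1 E2]]; simpl in *; rewrite <- E1, <- E2;
    injection E; intros E3 E4; rewrite E3, E4; auto.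
Qed.

Lemma pmap_aD_mul g h a : pmap (aD Ga (gmul Ga g h)) a = pmap (aD Ga g) (pmap (aD Ga h) a).
Proof. unfold pmap; simpl. rewrite !aDM. auto. Qed.

Lemma vertex_stab_card N c n f i a b :
  cardP (fun g => aV Ga g x = x) N -> cardP (fun g => aF Ga g f = f) n ->
  c < 4 -> a < 3 -> b < 3 -> i < p -> src (bd f i) = x -> ueq (corner f i) (U a, W b) ->
  C4_edgeb (qa a) (qb b) c = true -> N = fiber_size qa qb c * n.
Proof.
  intros HN Hn Hc Ha Hb Hi Hs Hu Mab.
  apply (orbit_stabilizer Ga (fun g => aV Ga g x = x) (fun g => aF Ga g f = f) act_edge (a, b)
    (filter (fun ab => C4_edgeb (qa (fst ab)) (qb (snd ab)) c) K33_edges) N n);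
    try assumption.
  - apply NoDup_filter, K33_edges_NoDup.
  - intros g e1 e2 _. apply act_edge_fun.
  - intros g Hg. destruct (act_edge_ex g a b Hg Ha Hb) as [[a' b'] He']. exists (a', b').
    split; auto. apply filter_In. pose proof He' as [A' [B' _]]. simpl in A', B'.
    split; [apply in_K33_edges; auto |]. simpl. rewrite C4_edgeb_ueq in *.
    eapply ueq_trans; [| exact Mab]. apply ueq_sym, (act_edge_labels g _ _ He').
  - intros [a' b'] He'. apply filter_In in He'. destruct He' as [He' M'].
    apply in_K33_edges in He'. destruct He' as [Ha' Hb'].
    destruct (act_edge_transitive a b a' b' c) as [g [Hg Hact]]; eauto.
  - intros g h Hg Hh. rewrite aVM, Hh, Hg. auto.
  - intros g e' h Hg [A1 [B1 H1]] Hh. split; auto. split; auto. simpl in *.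
    rewrite pmap_aD_mul, (face_stab_fixes_UW f i a b h Hu Hh). auto.
  - intros g g' e' Hg Hg' [A1 [B1 H1]] [A2 [B2 H2]].
    apply (act_edge_fixed_stab f i a b); auto. split; auto. split; auto. simpl in *.
    rewrite pmap_aD_mul.
    replace (U a, W b) with (pmap (aD Ga (ginv Ga g')) (pmap (aD Ga g') (U a, W b))) at 2
      by (unfold pmap; simpl; rewrite !aD_inv; auto).
    apply ueq_pmap. eapply ueq_trans; [exact H1 | apply ueq_sym; exact H2].
  - intros h Hh. rewrite <- Hs. apply (face_stab_fixes_vertex p Hp X Y Ga pV pD pF HY Hm HiD); auto.
Qed.

Lemma fiber_nonempty c : c < 4 -> fiber_size qa qb c <> 0 ->
  exists a b, a < 3 /\ b < 3 /\ C4_edgeb (qa a) (qb b) c = true.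
Proof.
  intros Hc H. unfold fiber_size in H.
  destruct (filter _ K33_edges) as [|[a b] l] eqn:E; [simpl in H; lia |].
  assert (Hab : In (a, b) (filter (fun ab => C4_edgeb (qa (fst ab)) (qb (snd ab)) c) K33_edges))
    by (rewrite E; simpl; auto).
  apply filter_In in Hab. destruct Hab as [Hab M]. apply in_K33_edges in Hab.
  exists a, b. tauto.
Qed.

Lemma vertex_count N (m : cF Y -> nat) :
  (forall f n, cardP (fun g => aF Ga g f = f) n -> m (pF f) = n) ->
  cardP (fun g => aV Ga g x = x) N ->
  forall m0, length (filter (fun c => m (fst (corY c)) =? m0) (seq 0 4)) =
    Nat.b2n (N =? m0) + 2 * Nat.b2n (N =? 2 * m0) + Nat.b2n (N =? 4 * m0).
Proof.
  intros Hmdef HN m0.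
  destruct (link_map_K33_C4_fibers qa qb qa_qb_adj qa_qb_cover) as [V1 [V2 [V4 Ho]]].
  assert (Hmc : forall c, c < 4 -> N = fiber_size qa qb c * m (fst (corY c))).
  { intros c Hc.
    assert (Hne : fiber_size qa qb c <> 0) by (destruct (Ho c Hc) as [H | [H | H]]; lia).
    destruct (fiber_nonempty c Hc Hne) as [a [b [Ha [Hb Mab]]]].
    destruct (UW_corner a b Ha Hb) as [f [i [Hi [Hs Hu]]]].
    destruct (corner_over_c f i a b c Hs Hu Hc Mab) as [-> _].
    destruct (cardP_exists _ (Hfin f)) as [n Hn].
    rewrite (Hmdef f n Hn). apply (vertex_stab_card N c n f i a b); auto. }
  rewrite <- (count_fiber_products (fiber_size qa qb) N m0 Ho V1 V2 V4).
  f_equal. apply filter_ext_in. intros c Hc. apply in_seq in Hc.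
  rewrite (Hmc c ltac:(lia)).
  assert (Hpos : 0 < fiber_size qa qb c) by (destruct (Ho c ltac:(lia)) as [H | [H | H]]; lia).
  destruct (Nat.eqb_spec (m (fst (corY c))) m0) as [E | E];
  destruct (Nat.eqb_spec (fiber_size qa qb c * m (fst (corY c))) (fiber_size qa qb c * m0))
    as [E' | E']; auto.
  - exfalso; apply E'; rewrite E; auto.
  - exfalso; apply E. apply Nat.mul_cancel_l in E'; lia.
Qed.

End LinkOfX.

Lemma vertex_count_at N (m : cF Y -> nat) :
  (forall f n, cardP (fun g => aF Ga g f = f) n -> m (pF f) = n) ->
  cardP (fun g => aV Ga g x = x) N ->
  forall m0, length (filter (fun c => m (fst (corY c)) =? m0) (seq 0 4)) =
    Nat.b2n (N =? m0) + 2 * Nat.b2n (N =? 2 * m0) + Nat.b2n (N =? 4 * m0).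
Proof.
  destruct (HX x) as [alX [beX [Ha [Hb He]]]].
  pose proof (link_iso_corner X x (Kvv_V 3) (Kvv_E 3) Kvv_ends alX beX He) as HenX.
  destruct (bij_on_inverse _ (Kvv_V 3) alX (false, 0) ltac:(unfold Kvv_V; simpl; lia) Ha)
    as [k Hk].
  apply (vertex_count alX beX Ha Hb HenX (fun a => k (false, a)) (fun b => k (true, b)));
    intros ? Hl; apply Hk; unfold Kvv_V; simpl; lia.
Qed.

End VertexStar.

Lemma face_stab_card_pF (m : cF Y -> nat) :
  (forall h, exists f, pF f = h /\ cardP (fun g => aF Ga g f = f) (m h)) ->
  forall f n, cardP (fun g => aF Ga g f = f) n -> m (pF f) = n.
Proof.
  intros Hm' f n Hn. destruct (Hm' (pF f)) as [f0 [E Hf0]].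
  apply HiF in E. destruct E as [g Hg].
  eapply cardP_unique; [| exact Hn]. eapply face_stab_card_conj; eauto.
Qed.

Lemma vertices_divisible (lV : list (cV Y)) (lF : list (cF Y)) :
  (forall x, finite_pred (fun g => aV Ga g x = x)) ->
  (forall y, exists x, pV x = y) -> (forall h, exists f, pF f = h) ->
  NoDup lV -> (forall y, In y lV) -> NoDup lF -> (forall h, In h lF) ->
  Nat.divide p (length lV).
Proof.
  intros Hfx HsV HsF HnV HaV HnF HaF.
  destruct (C4_link_choice Y HY) as [al [be [cor HYl]]].
  destruct (choice (fun y x => pV x = y /\ exists n, cardP (fun g => aV Ga g x = x) n))
    as [xl Hxl].
  { intros y. destruct (HsV y) as [x Hx]. exists x. split; auto. apply cardP_exists, Hfx. }
  destruct (choice (fun y n => cardP (fun g => aV Ga g (xl y) = xl y) n)) as [N HN].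
  { intros y. apply Hxl. }
  destruct (choice (fun h n => exists f, pF f = h /\ cardP (fun g => aF Ga g f = f) n))
    as [m Hm'].
  { intros h. destruct (HsF h) as [f Hf]. destruct (cardP_exists _ (Hfin f)) as [n Hn].
    exists n, f. auto. }
  pose proof (face_stab_card_pF m Hm') as Hmdef.
  apply (divide_length_by_descent p lV N (fun k => length (filter (fun h => m h =? k) lF))).
  - intros y _. eapply cardP_pos; [apply HN | apply aV1].
  - intros k _.
    rewrite <- (count_corners Y be cor lV lF (fun h => m h =? k)); auto;
      [| intros y; apply HYl | intros y; apply HYl].
    unfold count_value. rewrite <- !list_sum_map_mull, <- !list_sum_map_add.
    apply list_sum_map_ext. intros y _.
    destruct (Hxl y) as [Ey _]. destruct (HYl (pV (xl y))) as [H1 [H2 [H3 H4]]].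
    rewrite <- (vertex_count_at (xl y) _ _ _ H1 H2 H3 H4 (N y) m Hmdef (HN y) k), Ey.
    reflexivity.
Qed.

End Kvv3Quotient.

Lemma not_lattice_exists_3 (p g F : nat) (hp : 5 <= p) (hF : F * (p - 4) = 8 * (g - 1))
    (hF4 : ~ Nat.divide 4 F) :
  ~ lattice_exists p 3 g.
Proof.
  intros [X [[_ HX] [Ga [Hul [Y [[nF Htess] Hq]]]]]].
  destruct Hq as [pV [pD [pF [Hm [HsV [HsD [HsF [HiV [HiD HiF]]]]]]]]].
  destruct Hul as [_ [_ [_ [Hfx [_ Hff]]]]].
  destruct Htess as [_ [HY [_ [[lF [HnF [HaF HlF]]] Heuler]]]].
  destruct Heuler as [nV [nD [[lV [HnV [HaV HlV]]] [[lD [HnD [HaD HlD]]] Heuler]]]].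
  destruct (C4_link_choice Y HY) as [al [be [cor HYl]]].
  assert (Hdarts : length lD = 4 * length lV).
  { apply (count_darts Y al); auto. apply HYl. }
  assert (Hcorners : 4 * length lV = p * length lF).
  { rewrite <- (filter_true lF).
    rewrite <- (count_corners Y be cor lV lF (fun _ => true)); auto; try apply HYl.
    rewrite (list_sum_map_ext _ (fun _ => 4)); [symmetry; apply list_sum_const |].
    intros y _. rewrite filter_true. apply length_seq. }
  destruct (vertices_divisible p ltac:(lia) X Y Ga pV pD pF HX HY Hm HsD HiV HiD HiF Hff
    lV lF Hfx HsV HsF HnV HaV HnF HaF) as [w Hw].
  subst. apply hF4. exists w.
  assert (Hfaces : length lF = 4 * w) by nia.
  assert (HF2 : length lF * (p - 4) = F * (p - 4)) by nia.
  apply Nat.mul_cancel_r in HF2; lia.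
Qed.

Theorem proposition5p4 (p g F : nat) (hp : 5 <= p) (hg : 2 <= g)
    (hF : F * (p - 4) = 8 * (g - 1)) (hFpos : 0 < F) (hF4 : ~ Nat.divide 4 F) :
  ~ lattice_exists p 3 g /\
  ~ (exists Y : cx p, tessellation p g F Y /\
       forall v, 3 <= v -> Nat.Odd v ->
         exists X : cx p, bourdon p v X /\
         exists Ga : action X, uniform_lattice Ga /\ quotient_iso Ga Y).
Proof.
  pose proof (not_lattice_exists_3 p g F hp hF hF4) as Hno3.
  split; [exact Hno3 |].
  intros [Y [Ht Hall]]. apply Hno3.
  destruct (Hall 3 (le_n 3) ltac:(exists 1; reflexivity)) as [X [HXb [Ga [Hul Hq]]]].
  exists X. split; auto. exists Ga. split; auto. exists Y. split; auto. exists F; auto.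
Qed.
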